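(* Let $N=\{1,\dots,n\}$ be agents and $A$ a finite item set with additive valuations with externalities $V_i(j,a)\in\mathbb{R}$. Every complete allocation satisfying PROP-Ave satisfies GFS.
   Context: A complete allocation $\pi$ partitions $A$ into bundles $\pi_1,\dots,\pi_n$; $\pi(a)$ is the agent receiving $a$; $V_i(j,a)$ is agent $i$'s value when item $a$ goes to agent $j$; $V_i(\pi)=\sum_{a\in A}V_i(\pi(a),a)$. $\pi$ satisfies PROP-Ave if $V_i(\pi)\ge\frac1n\sum_{a\in A}\sum_{j\in N}V_i(j,a)$ for all $i$. Let $V_i^{max}(a)=\max_{j\in N}V_i(j,a)$, $V_i^{min}(a)=\min_{j\in N}V_i(j,a)$, $\mathrm{GFS}_i=\frac1n\sum_{a\in A}(V_i^{max}(a)-V_i^{min}(a))$; $\pi$ satisfies GFS if $V_i(\pi)\ge\mathrm{GFS}_i+\sum_{a\in A}V_i^{min}(a)$ for all $i\in N$. *)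

(* Agents N = 'I_n, items A : finType, valuations
   V i j a = V_i(j,a) : value to agent i when item a goes to agent j. *)
From HB Require Import structures.
From mathcomp Require Import all_boot all_order all_algebra.
Set Implicit Arguments. Unset Strict Implicit. Unset Printing Implicit Defensive.
Import Order.TTheory GRing.Theory Num.Theory.
Local Open Scope ring_scope.

Section Defs.
Variables (R : realFieldType) (n : nat) (A : finType).
Variable V : 'I_n -> 'I_n -> A -> R.

(* A complete allocation: every item is assigned to exactly one agent,
   i.e. a function pi : A -> 'I_n (pi a = the agent receiving a). *)
Definition value (i : 'I_n) (pi : A -> 'I_n) : R :=
  \sum_(a : A) V i (pi a) a.

Definition PROP_Ave (pi : A -> 'I_n) : Prop :=
  forall i : 'I_n,
    value i pi >= n%:R^-1 * \sum_(a : A) \sum_(j < n) V i j a.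

(* max / min over j in N; the seed V i i a is itself one of the values,
   so these are the true max / min over the nonempty set N. *)
Definition Vmax (i : 'I_n) (a : A) : R :=
  \big[Num.max/V i i a]_(j < n) V i j a.
Definition Vmin (i : 'I_n) (a : A) : R :=
  \big[Num.min/V i i a]_(j < n) V i j a.

Definition GFS_share (i : 'I_n) : R :=
  n%:R^-1 * \sum_(a : A) (Vmax i a - Vmin i a).

Definition GFS (pi : A -> 'I_n) : Prop :=
  forall i : 'I_n,
    value i pi >= GFS_share i + \sum_(a : A) Vmin i a.
End Defs.

From mathcomp Require Import all_boot all_order all_algebra.
Import Order.TTheory GRing.Theory Num.Theory.
Local Open Scope ring_scope.

(* For every agent i and item a, the terms V_i(j,a) - V_i^min(a) are
   nonnegative and one of them is V_i^max(a) - V_i^min(a), so the spread of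
   a is at most their sum, i.e. at most sum_j V_i(j,a) - n V_i^min(a).
   Summing over the items and dividing by n shows that the GFS bound is at
   most the proportional average, hence below any PROP-Ave value. *)

Lemma ler_sum_term (R : numDomainType) (I : finType) (F : I -> R) (k : I) :
  (forall j, 0 <= F j) -> F k <= \sum_j F j.
Proof. by move=> F_ge0; rewrite (bigD1 k) //= lerDl sumr_ge0. Qed.

Section GFSBound.
Context {R : realFieldType} {n : nat} {A : finType}.
Variable V : 'I_n -> 'I_n -> A -> R.

Lemma Vmin_le (i j : 'I_n) (a : A) : Vmin V i a <= V i j a.
Proof. exact: bigmin_le. Qed.

Lemma Vspread_le (i : 'I_n) (a : A) :
  Vmax V i a - Vmin V i a <= \sum_(j < n) V i j a - n%:R * Vmin V i a.
Proof.
have excessE : \sum_(j < n) V i j a - n%:R * Vmin V i a =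
               \sum_(j < n) (V i j a - Vmin V i a).
  by rewrite sumrB sumr_const card_ord mulr_natl.
have le_excess k : V i k a - Vmin V i a <= \sum_(j < n) (V i j a - Vmin V i a).
  by apply: ler_sum_term => j; rewrite subr_ge0 Vmin_le.
by rewrite excessE lerBlDr; apply: bigmax_le => [|k _]; rewrite -lerBlDr.
Qed.

Lemma GFS_le_average (i : 'I_n) :
  GFS_share V i + \sum_(a : A) Vmin V i a <=
  n%:R^-1 * \sum_(a : A) \sum_(j < n) V i j a.
Proof.
have n_neq0 : (n%:R : R) != 0 by rewrite pnatr_eq0 -lt0n (leq_ltn_trans _ (ltn_ord i)).
have spread_sum : \sum_(a : A) (Vmax V i a - Vmin V i a) <=
    \sum_(a : A) \sum_(j < n) V i j a - n%:R * \sum_(a : A) Vmin V i a.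
  by rewrite mulr_sumr -sumrB; apply: ler_sum => a _; apply: Vspread_le.
rewrite -lerBrDr /GFS_share.
apply: le_trans (ler_wpM2l _ spread_sum) _; first by rewrite invr_ge0 ler0n.
by rewrite mulrBr mulKf.
Qed.

End GFSBound.

Theorem proposition4 (R : realFieldType) (n : nat) (A : finType)
    (V : 'I_n -> 'I_n -> A -> R) (pi : A -> 'I_n) :
  PROP_Ave V pi -> GFS V pi.
Proof. by move=> prop_ave i; apply: le_trans (GFS_le_average V i) (prop_ave i). Qed.
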